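(* Fix an integer $\overline{m}\geq 1$, put $m=2\overline{m}$, and let $G_2=(\{1,2\},A,1,2)$ be the doubly-rooted digraph with roots $s=1$, $t=2$ and edges $a_1,\dots,a_{m+3}$, where (writing $a_x=(i,j)$ for $a_x^-=i$, $a_x^+=j$) $a_{2\ell-1}=(1,2)$, $a_{2\ell}=(2,1)$ for $\ell=1,\dots,\overline{m}$, $a_{m+1}=(1,1)$, $a_{m+2}=(1,2)$, $a_{m+3}=(2,2)$. Let $B=\{a_1,\dots,a_m\}$. Then, with respect to the enumeration $(a_1,\dots,a_{m+3})$, $S(G_2,B)=\big((\overline{m}+1)!\big)^2$.
   Context: For a doubly-rooted digraph $G=(V,A,s,t)$ (each edge $a$ has source $a^-$, target $a^+$; loops and multiple edges allowed) with enumeration $A=\{a_1,\dots,a_k\}$ and $B\subseteq A$: $M(B)=\{j\in[k]:a_j\in B\}$; $P(G)=\{\sigma\in\mathfrak{S}_k: a_{\sigma(1)}^-=s,\ a_{\sigma(k)}^+=t,\ a_{\sigma(j+1)}^-=a_{\sigma(j)}^+\ \forall j\in[k-1]\}$; for $M=\{j_1<\dots<j_\ell\}\subseteq[k]$, $\sigma_M\in\mathfrak{S}_\ell$ is $\sigma_M(g)=|\{h\in[\ell]:\sigma(j_h)\le\sigma(j_g)\}|$; $S(G,B)=\sum_{\sigma\in P(G)}\mathrm{sgn}(\sigma)\mathrm{sgn}(\sigma_{M(B)})$. *)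

From mathcomp Require Import all_boot all_order all_algebra all_fingroup.
Set Implicit Arguments. Unset Strict Implicit. Unset Printing Implicit Defensive.
Import GRing.Theory.
Local Open Scope ring_scope.

(* A doubly-rooted digraph with vertex type V and edges a_0, ..., a_(k-1)
   (0-indexed version of a_1..a_k), given by source/target maps
   src (= a^-) and tgt (= a^+) and roots s, t. *)

Definition sgn n (p : 'S_n) : int := (-1) ^+ (odd_perm p).

(* P(G): permutations sigma of the edge indices (position j |-> edge index
   sigma j) forming an Eulerian trail from s to t. *)
Definition in_P (V : eqType) k (src tgt : 'I_k -> V) (s t : V) (sigma : 'S_k) : bool :=
  [&& [forall j : 'I_k, (val j == 0)%N ==> (src (sigma j) == s)],
      [forall j : 'I_k, (val j == k.-1)%N ==> (tgt (sigma j) == t)] &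
      [forall j : 'I_k, forall j' : 'I_k,
          (val j == (val j').+1)%N ==> (src (sigma j) == tgt (sigma j'))]].

(* sigma_M for M = {j_1 < ... < j_l} (enumerated increasingly by enum_val):
   sigma_M(g) = #{h : pos(j_h) <= pos(j_g)} (here shifted to 0-indexed),
   where pos = sigma^-1 gives the position of an edge in the trail
   (the literal reading with sigma is inconsistent).
   We pick the permutation of 'I_#|M| equal to this function
   (it always is a permutation since sigma is injective). *)
Definition restr_fun k (sigma : 'S_k) (M : {set 'I_k}) (g : 'I_#|M|) : nat :=
  (#|[set h : 'I_#|M| | ((sigma^-1)%g (enum_val h) <= (sigma^-1)%g (enum_val g))%N]|).-1.

Definition restr_perm_M k (sigma : 'S_k) (M : {set 'I_k}) : 'S_#|M| :=
  odflt 1%g [pick p : 'S_#|M| | [forall g, val (p g) == restr_fun sigma g]].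

Definition S_GB (V : eqType) k (src tgt : 'I_k -> V) (s t : V) (M : {set 'I_k}) : int :=
  \sum_(sigma : 'S_k | in_P src tgt s t sigma) sgn sigma * sgn (restr_perm_M sigma M).

(* The digraph G_2 for mb = \overline{m}, m = 2 mb, with k = m + 3 edges,
   0-indexed: edge x corresponds to a_(x+1). Vertices are 1 and 2 (nat). *)
Definition G2_src (mb : nat) (x : 'I_(2 * mb + 3)) : nat :=
  if (val x < 2 * mb)%N then (if odd x then 2%N else 1%N)
  else if (val x == 2 * mb)%N then 1%N
  else if (val x == (2 * mb).+1)%N then 1%N
  else 2%N.

Definition G2_tgt (mb : nat) (x : 'I_(2 * mb + 3)) : nat :=
  if (val x < 2 * mb)%N then (if odd x then 1%N else 2%N)
  else if (val x == 2 * mb)%N then 1%N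
  else if (val x == (2 * mb).+1)%N then 2%N
  else 2%N.

Definition G2_M (mb : nat) : {set 'I_(2 * mb + 3)} := [set x | (val x < 2 * mb)%N].
Arguments G2_src : clear implicits.
Arguments G2_tgt : clear implicits.
Arguments G2_M : clear implicits.

From mathcomp Require Import all_boot all_order all_algebra all_fingroup.
From mathcomp Require Import zify ring.
Set Implicit Arguments. Unset Strict Implicit. Unset Printing Implicit Defensive.
Import Order.TTheory GRing.Theory Num.Theory.
Local Open Scope ring_scope.

(* Writing signs as parities of inversion numbers, sgn sigma * sgn sigma_M is
   the parity of the number of pairs of edges in which an edge outside
   B = {a_1, ..., a_m} is traversed before an edge of smaller index.  Hence the
   sign of a trail is a product over its edges, the factor of the first edge x
   being (-1)^(number of remaining edges of index < x) when x is not in B.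
   Conditioning on the first edge, the signed number of trails from a vertex
   through a set of remaining edges depends only on the vertex, on the numbers
   of remaining edges 1 -> 2 and 2 -> 1 of B, and on which of the three edges
   a_(m+1), a_(m+2), a_(m+3) remain.  It satisfies a recursion in these data
   whose solution is explicit, and equals ((mb+1)!)^2 on the full edge set. *)

(* The Vandermonde determinant of [0, ..., n-1] is positive, and permuting its
   columns by [s] multiplies it by [sgn s] and flips exactly the factors of
   the inversions of [s]. *)
Lemma sgn_inversions n (s : 'S_n) :
  sgn s = (-1) ^+ (\sum_(i < n) \sum_(j < n) ((i < j) && (s j < s i)))%N.
Proof.
pose a : 'rV[int]_n := \row_j (j : nat)%:Z.
pose b : 'rV[int]_n := \row_j (s j : nat)%:Z.
have perm_cols : col_perm s (Vandermonde n a) = Vandermonde n b.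
  by apply/matrixP => i j; rewrite !mxE.
have det_perm_cols : \det (Vandermonde n b) = (-1) ^+ s * \det (Vandermonde n a).
  by rewrite -perm_cols col_permE det_mulmx det_perm odd_permV mulrC.
have sgM := big_morph Num.sg (@sgrM _) (@sgr1 _).
move: (congr1 Num.sg det_perm_cols); rewrite !det_Vandermonde sgrM !sgM.
rewrite [X in _ = _ * X]big1 => [|i _]; last first.
  by rewrite sgM big1 // => j ij; rewrite !mxE gtr0_sg // subr_gt0 ltz_nat.
rewrite /sgn mulr1 sgrX sgrN1 => <-.
rewrite -prodrXr; apply: eq_bigr => i _; rewrite sgM -prodrXr big_mkcond.
apply: eq_bigr => j _; case: ifP => //= ij; rewrite !mxE.
have [ji|ij'|/val_inj/perm_inj eij] := ltngtP (s j) (s i).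
- by rewrite ltr0_sg // subr_lt0 ltz_nat.
- by rewrite gtr0_sg // subr_gt0 ltz_nat.
- by rewrite eij ltnn in ij.
Qed.

Lemma ltn_enum_val k (M : {set 'I_k}) (g h : 'I_#|M|) :
  (enum_val g < enum_val h)%N = (g < h)%N.
Proof.
have sorted_M : sorted ltn [seq val x | x <- enum M].
  have -> : enum M = [seq x <- enum 'I_k | x \in M] by rewrite {1}/enum_mem -enumT.
  rewrite sorted_map; apply: (sorted_filter (leT := relpre val ltn)).
    by move=> y x z /=; apply: ltn_trans.
  by rewrite -sorted_map val_enum_ord iota_ltn_sorted.
have size_M : size [seq val x | x <- enum M] = #|M| by rewrite size_map -cardE.
pose x0 := enum_val g.
rewrite (enum_val_nth x0 g) (enum_val_nth x0 h) -!(nth_map x0 0%N) -?cardE //.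
by apply: (lt_sorted_ltn_nth 0%N sorted_M); rewrite inE size_M.
Qed.

Section RestrictedPermutation.
Variables (k : nat) (sigma : 'S_k) (M : {set 'I_k}).
Local Notation pos := (sigma^-1)%g.

Lemma restr_fun_ltn (g h : 'I_#|M|) :
  (pos (enum_val g) < pos (enum_val h))%N -> (restr_fun sigma g < restr_fun sigma h)%N.
Proof.
move=> gh; rewrite /restr_fun; set A := [set _ | _]; set B := [set _ | _].
have AB : A \proper B.
  apply/properP; split.
    by apply/subsetP => x; rewrite !inE => xg; apply: leq_trans xg (ltnW gh).
  by exists h; rewrite !inE ?leqnn // leqNgt gh.
have A_gt0 : (0 < #|A|)%N by apply/card_gt0P; exists g; rewrite inE.
by have := proper_card AB; lia.
Qed.

Lemma restr_fun_bound (g : 'I_#|M|) : (restr_fun sigma g < #|M|)%N.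
Proof.
rewrite /restr_fun; set A := [set _ | _].
have A_gt0 : (0 < #|A|)%N by apply/card_gt0P; exists g; rewrite inE.
by have := max_card A; rewrite card_ord; lia.
Qed.

Definition restr_ord (g : 'I_#|M|) : 'I_#|M| := Ordinal (restr_fun_bound g).

Lemma ltn_restr_ord (g h : 'I_#|M|) :
  (restr_ord g < restr_ord h)%N = (pos (enum_val g) < pos (enum_val h))%N.
Proof.
have [gh|hg|/val_inj/perm_inj/enum_val_inj->] := ltngtP (pos (enum_val g)) (pos (enum_val h)).
- exact: restr_fun_ltn.
- by apply/negbTE; rewrite -leqNgt ltnW // restr_fun_ltn.
- by rewrite ltnn.
Qed.

Lemma restr_ord_inj : injective restr_ord.
Proof.
move=> g h eq_gh; apply: enum_val_inj; apply: (@perm_inj _ pos); apply: ord_inj.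
have := ltn_restr_ord g h; have := ltn_restr_ord h g; rewrite eq_gh ltnn.
by case: ltngtP.
Qed.

Lemma restr_perm_ME : restr_perm_M sigma M = perm restr_ord_inj.
Proof.
rewrite /restr_perm_M; case: pickP => [p /forallP p_restr | no_restr] /=.
  by apply/permP => g; apply: ord_inj; rewrite permE; apply/eqP; apply: p_restr.
move: (no_restr (perm restr_ord_inj)); rewrite (_ : [forall g, _] = true) //.
by apply/forallP => g; rewrite permE.
Qed.

Lemma sgn_restr_perm_M : sgn (restr_perm_M sigma M) =
  (-1) ^+ (\sum_(x < k) \sum_(y < k)
             [&& (x < y)%N, x \in M, y \in M & (pos y < pos x)%N])%N.
Proof.
rewrite restr_perm_ME sgn_inversions; congr (_ ^+ _).
rewrite [RHS](bigID (mem M)) /= [X in (_ + X)%N]big1 ?addn0; last first.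
  by move=> x xM; rewrite big1 // => y _; rewrite (negbTE xM) andbF.
rewrite [RHS]big_enum_val /=; apply: eq_bigr => g _.
rewrite [RHS](bigID (mem M)) /= [X in (_ + X)%N]big1 ?addn0; last first.
  by move=> y yM; rewrite (negbTE yM) !andbF.
rewrite [RHS]big_enum_val /=; apply: eq_bigr => h _.
by rewrite !(permE restr_ord_inj) ltn_restr_ord ltn_enum_val !enum_valP.
Qed.

Lemma sgn_mul_restr_perm_M : sgn sigma * sgn (restr_perm_M sigma M) =
  (-1) ^+ (\sum_(x < k) \sum_(y < k)
             [&& (x < y)%N, ~~ ((x \in M) && (y \in M)) & (pos y < pos x)%N])%N.
Proof.
have -> : sgn sigma = sgn pos by rewrite /sgn odd_permV.
rewrite sgn_restr_perm_M sgn_inversions.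
set inv := (\sum_(x < k) _)%N; set invM := (\sum_(x < k) _)%N.
have -> : inv = (\sum_(x < k) \sum_(y < k)
    [&& (x < y)%N, ~~ ((x \in M) && (y \in M)) & (pos y < pos x)%N] + invM)%N.
  rewrite -big_split; apply: eq_bigr => x _; rewrite -big_split; apply: eq_bigr => y _.
  by case: (x < y)%N; case: (x \in M); case: (y \in M); case: (pos y < pos x)%N.
by rewrite exprD -mulrA -expr2 -exprM mulnC exprM sqrrN !expr1n mulr1.
Qed.
End RestrictedPermutation.

Definition edge_seq k (sigma : 'S_k) : seq nat := [seq val (sigma i) | i <- enum 'I_k].

Lemma size_edge_seq k (sigma : 'S_k) : size (edge_seq sigma) = k.
Proof. by rewrite size_map size_enum_ord. Qed.

Lemma nth_edge_seq k (sigma : 'S_k) (i : 'I_k) : nth 0%N (edge_seq sigma) i = sigma i.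
Proof. by rewrite (nth_map i) ?size_enum_ord // nth_ord_enum. Qed.

Lemma edge_seq_inj k : injective (@edge_seq k).
Proof. by move=> s t eq_st; apply/permP => i; apply: ord_inj; rewrite -!nth_edge_seq eq_st. Qed.

Lemma perm_edge_seq k (sigma : 'S_k) : perm_eq (edge_seq sigma) (iota 0 k).
Proof.
rewrite -val_enum_ord /edge_seq (map_comp val sigma); apply: perm_map.
apply: uniq_perm; rewrite ?(map_inj_uniq (@perm_inj _ sigma)) ?enum_uniq //.
by move=> i; rewrite mem_enum; apply/mapP; exists ((sigma^-1)%g i); rewrite ?mem_enum ?permKV.
Qed.

(* Both lists are duplicate-free of length k!, so inclusion is enough. *)
Lemma perm_edge_seq_permutations k :
  perm_eq [seq edge_seq sigma | sigma : 'S_k] (permutations (iota 0 k)).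
Proof.
have uniq_es : uniq [seq edge_seq sigma | sigma : 'S_k].
  by rewrite map_inj_uniq ?enum_uniq //; apply: edge_seq_inj.
have sub_es : {subset [seq edge_seq sigma | sigma : 'S_k] <= permutations (iota 0 k)}.
  by move=> _ /mapP[sigma _ ->]; rewrite mem_permutations perm_edge_seq.
have size_es : (size (permutations (iota 0 k)) <= size [seq edge_seq sigma | sigma : 'S_k])%N.
  by rewrite size_map -cardE card_Sn size_permutations ?iota_uniq ?size_iota.
have [_ eq_es] := uniq_min_size uniq_es sub_es size_es.
by apply: uniq_perm; rewrite ?permutations_uniq.
Qed.

Lemma sum_edge_seq (R : nmodType) k (F : seq nat -> R) :
  \sum_(sigma : 'S_k) F (edge_seq sigma) = \sum_(s <- permutations (iota 0 k)) F s.
Proof. by rewrite -(perm_big _ (perm_edge_seq_permutations k)) big_map big_enum. Qed.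

Fixpoint inv_above (m : nat) (s : seq nat) : nat :=
  if s is x :: t then ((if m <= x then count (ltn^~ x) t else 0) + inv_above m t)%N
  else 0%N.

Lemma inv_aboveE m s : inv_above m s =
  (\sum_(0 <= i < size s) \sum_(0 <= j < size s)
     [&& i < j, nth 0 s j < nth 0 s i & m <= nth 0 s i])%N.
Proof.
elim: s => [|x t IH]; first by rewrite big_geq.
rewrite /= big_nat_recl // big_nat_recl //= add0n IH; congr (_ + _)%N.
  rewrite -sum1_count (big_nth 0%N) big_mkcond /=.
  case: (m <= x)%N; last by rewrite big1 // => j _; rewrite andbF.
  by apply: eq_bigr => j _; rewrite andbT; case: ifP.
by apply: eq_bigr => i _; rewrite big_nat_recl.
Qed.

Lemma inv_above_edge_seq k m (sigma : 'S_k) : inv_above m (edge_seq sigma) =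
  (\sum_(x < k) \sum_(y < k)
     [&& (x < y)%N, (m <= y)%N & ((sigma^-1)%g y < (sigma^-1)%g x)%N])%N.
Proof.
rewrite inv_aboveE size_edge_seq big_mkord.
under eq_bigr => i _ do rewrite big_mkord.
rewrite [RHS](reindex_inj (@perm_inj _ sigma)).
under [RHS]eq_bigr => i _ do rewrite (reindex_inj (@perm_inj _ sigma)).
rewrite [RHS]exchange_big; apply: eq_bigr => i _; apply: eq_bigr => j _.
by rewrite !nth_edge_seq !permK andbC -andbA.
Qed.

Lemma sgn_mul_restr_perm_prefix k m (sigma : 'S_k) :
  sgn sigma * sgn (restr_perm_M sigma [set x : 'I_k | (x < m)%N]) =
  (-1) ^+ inv_above m (edge_seq sigma).
Proof.
rewrite sgn_mul_restr_perm_M inv_above_edge_seq; congr (_ ^+ _).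
by apply: eq_bigr => x _; apply: eq_bigr => y _; rewrite !inE; lia.
Qed.

Fixpoint trail (V : eqType) (src tgt : nat -> V) (v t : V) (s : seq nat) : bool :=
  if s is x :: s' then (src x == v) && trail src tgt (tgt x) t s' else v == t.

Lemma trailE (V : eqType) (src tgt : nat -> V) v t s : (0 < size s)%N ->
  trail src tgt v t s = [&& src (nth 0%N s 0) == v, tgt (last 0%N s) == t &
     all (fun j => src (nth 0%N s j.+1) == tgt (nth 0%N s j)) (iota 0 (size s).-1)].
Proof.
elim: s v => [|x [|y s] IH] v //= _; first by rewrite andbT.
transitivity ((src x == v) && trail src tgt (tgt x) t (y :: s)) => //.
rewrite IH //= (iotaDl 1 0) all_map /=.
by case: (src y == tgt x); case: (tgt (last y s) == t).
Qed.

Lemma in_P_trail (V : eqType) k (src tgt : nat -> V) s t (sigma : 'S_k) : (0 < k)%N ->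
  in_P (fun x : 'I_k => src x) (fun x : 'I_k => tgt x) s t sigma =
  trail src tgt s t (edge_seq sigma).
Proof.
move=> k_gt0; have km1 : (k.-1 < k)%N by rewrite prednK.
rewrite trailE ?size_edge_seq // /in_P -nth_last size_edge_seq.
rewrite (nth_edge_seq sigma (Ordinal k_gt0)) (nth_edge_seq sigma (Ordinal km1)).
congr [&& _, _ & _].
- apply/forallP/idP => [/(_ (Ordinal k_gt0)) // | first_s j].
  by apply/implyP => /eqP j0; rewrite (_ : j = Ordinal k_gt0) //; apply: ord_inj.
- apply/forallP/idP => [/(_ (Ordinal km1)) /implyP-> // | last_t j].
  by apply/implyP => /eqP j0; rewrite (_ : j = Ordinal km1) //; apply: ord_inj.
apply/forallP/allP => [steps j | steps j].
  rewrite mem_iota /= => jk; have j1k : (j.+1 < k)%N by rewrite -ltn_predRL.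
  move/forallP: (steps (Ordinal j1k)) => /(_ (Ordinal (ltnW j1k))).
  by rewrite (nth_edge_seq sigma (Ordinal j1k)) (nth_edge_seq sigma (Ordinal (ltnW j1k))) eqxx.
apply/forallP => j'; apply/implyP => /eqP jj'.
have : val j' \in iota 0 k.-1 by rewrite mem_iota /= ltn_predRL -jj' ltn_ord.
by move/steps; rewrite -jj' !nth_edge_seq.
Qed.

Lemma count_ltnS n s : count (ltn^~ n.+1) s = (count (ltn^~ n) s + count_mem n s)%N.
Proof. by elim: s => //= y s ->; rewrite ltnS leq_eqVlt; lia. Qed.

Lemma count_ltn_rem x r : count (ltn^~ x) (rem x r) = count (ltn^~ x) r.
Proof. by rewrite count_rem /= ltnn andbF subn0. Qed.

Lemma sum_pred1_uniq (R : nmodType) (T : eqType) (r : seq T) (y : T) (F : T -> R) :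
  uniq r -> \sum_(x <- r | x == y) F x = F y *+ (y \in r).
Proof.
move=> r_uniq; have [y_r|y_r] := boolP (y \in r).
  by rewrite -big_filter filter_pred1_uniq // big_seq1.
by rewrite big1_seq // => x /andP[/eqP-> y_r']; rewrite y_r' in y_r.
Qed.

Lemma big_permutations_rem (R : Type) (idx : R) (op : Monoid.com_law idx) (T : eqType)
    (r : seq T) (F : seq T -> R) : uniq r -> r != [::] ->
  \big[op/idx]_(s <- permutations r) F s =
  \big[op/idx]_(x <- r) \big[op/idx]_(t <- permutations (rem x r)) F (x :: t).
Proof.
move=> r_uniq r_ne; rewrite (perm_big _ (permutationsE _)); last by case: r r_ne {r_uniq}.
by rewrite undup_id // big_allpairs_dep.
Qed.

Lemma sum_const_in (R : nmodType) (T : eqType) (r : seq T) (P : pred T) (F : T -> R) c :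
  {in r, forall x, P x -> F x = c} -> \sum_(x <- r | P x) F x = c *+ count P r.
Proof.
move=> F_c; rewrite big_seq_cond (eq_bigr (fun=> c)) => [|x /andP[]]; last exact: F_c.
by rewrite -big_seq_cond big_const_seq iter_addr_0.
Qed.

Lemma count_iota_ltn (P : pred nat) m n : (m <= n)%N ->
  count (fun x => (x < m)%N && P x) (iota 0 n) = count P (iota 0 m).
Proof.
move=> m_le_n; rewrite -(subnKC m_le_n) iotaD count_cat add0n.
rewrite [X in (_ + X)%N](eq_in_count (a2 := pred0)) ?count_pred0 ?addn0 => [|x].
  by apply: eq_in_count => x; rewrite mem_iota => /andP[_ ->].
by rewrite mem_iota => /andP[/leq_gtF->].
Qed.

Lemma count_odd_iota n : count odd (iota 0 (2 * n)) = n.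
Proof.
elim: n => // n IH; rewrite (_ : 2 * n.+1 = 2 * n + 2)%N; last by lia.
by rewrite iotaD count_cat IH /= add0n oddM /=; lia.
Qed.

Lemma count_even_iota n : count (predC odd) (iota 0 (2 * n)) = n.
Proof. by have := count_predC odd (iota 0 (2 * n)); rewrite count_odd_iota size_iota; lia. Qed.

(* The signed number of trails from [v] to 2 through [a] edges 1 -> 2 and [b]
   edges 2 -> 1 of B, plus the loop a_(m+1) at 1 if [l1], the edge
   a_(m+2) : 1 -> 2 if [e] and the loop a_(m+3) at 2 if [l2].  The trail crosses
   a + e = b + 1 times (from 1) or a + e = b times (from 2) between the vertices,
   in (a + e)! b! orders; the last factor accounts for the loops. *)
Definition signed_trails (v a b : nat) (l1 e l2 : bool) : int :=
  if v == 1%N then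
    if (a + e == b.+1)%N then
      ((a + e)`! * b`!)%:R *
        (if l1 then (-1) ^+ (~~ e) * b.+1%:R else if l2 then b.+1%:R else 1)
    else 0
  else if v == 2%N then
    if (a + e == b)%N then
      ((a + e)`! * b`!)%:R *
        (if l1 then (if l2 then 0 else (-1) ^+ (~~ e) * b%:R) else if l2 then b.+1%:R else 1)
    else 0
  else 0.

Lemma signr_addnn n : (-1) ^+ (n + n)%N = 1 :> int.
Proof. by rewrite -signr_odd oddD addbb. Qed.

Lemma signed_trails_full n : signed_trails 1 n n true true true = ((n.+1)`! ^ 2)%:R.
Proof. by rewrite /signed_trails /= addn1 eqxx natrX !factS !natrM; ring. Qed.

Lemma signed_trails_rec v a b (l1 e l2 : bool) : (0 < a + b + l1 + e + l2)%N ->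
  signed_trails v a b l1 e l2 =
    (v == 1%N)%:R * (a%:R * signed_trails 2 a.-1 b l1 e l2
                    + l1%:R * (-1) ^+ (a + b) * signed_trails 1 a b false e l2
                    + e%:R * (-1) ^+ (a + b + l1) * signed_trails 2 a b l1 false l2)
  + (v == 2%N)%:R * (b%:R * signed_trails 1 a b.-1 l1 e l2
                    + l2%:R * (-1) ^+ (a + b + l1 + e) * signed_trails 2 a b l1 e false).
Proof.
move=> n_gt0; rewrite /signed_trails.
case: v => [|[|[|v]]] /=; rewrite ?mul0r ?mul1r ?addr0 ?add0r //.
- clear n_gt0; case: e; rewrite /= ?addn1 ?addn0 ?eqSS.
  + have [<-|neq] := eqVneq a b; last first.
      by case: a neq => [|a] /= neq; rewrite ?addn1 ?(negbTE neq) ?mul0r ?mulr0 ?addr0.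
    rewrite signr_addnn exprD signr_addnn mul1r.
    by case: a => [|a]; rewrite /= ?addn1 ?eqxx ?factS ?fact0 ?natrM; case: l1; case: l2 => /=; ring.
  + case: a => [|a] /=; first by rewrite !mul0r mulr0 !addr0.
    have [<-|neq] := eqVneq a b; last by rewrite eqSS (negbTE neq) !mulr0 !mul0r !addr0.
    rewrite eqxx addSn [(-1) ^+ (a + a).+1]exprS signr_addnn !factS !natrM.
    by case: l1; case: l2 => /=; ring.
case: b n_gt0 => [|b] n_gt0 /=.
  have [a_e0|_] := eqVneq (a + e)%N 0%N; last by rewrite mul0r mulr0 addr0.
  move: n_gt0; have [-> ->] : a = 0%N /\ e = false by move: a_e0; case: e; lia.
  by case: l1; case: l2 => //= _; ring.
rewrite (_ : (a + b.+1 + l1 + e = (a + e) + b.+1 + l1)%N); last by lia.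
have [->|_] := eqVneq (a + e)%N b.+1; last by rewrite !mulr0 addr0.
rewrite exprD signr_addnn mul1r !factS !natrM.
by clear n_gt0; case: l1; case: l2 => /=; ring.
Qed.

Section G2.
Variable m : nat.

(* Edge [x] is a_(x+1); on ['I_(2 * mb + 3)] these are [G2_src mb] and
   [G2_tgt mb], extended to all of nat so that trails are lists of numbers. *)
Definition G2_srcn (x : nat) : nat :=
  if (x < m)%N then (if odd x then 2%N else 1%N)
  else if x == m then 1%N else if x == m.+1 then 1%N else 2%N.

Definition G2_tgtn (x : nat) : nat :=
  if (x < m)%N then (if odd x then 1%N else 2%N)
  else if x == m then 1%N else if x == m.+1 then 2%N else 2%N.

Definition is_up x := (x < m)%N && ~~ odd x.
Definition is_down x := (x < m)%N && odd x.

Lemma count_ltn_up_down s : count (ltn^~ m) s = (count is_up s + count is_down s)%N.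
Proof. by elim: s => //= y s ->; rewrite /is_up /is_down; case: (odd y); case: (y < m)%N; lia. Qed.

Definition trail_weight (v : nat) (s : seq nat) : int :=
  (trail G2_srcn G2_tgtn v 2%N s)%:R * (-1) ^+ inv_above m s.

Lemma sum_trail_weight_cons r x v :
  \sum_(t <- permutations r) trail_weight v (x :: t) =
  (G2_srcn x == v)%:R * (-1) ^+ (if (m <= x)%N then count (ltn^~ x) r else 0%N) *
  \sum_(t <- permutations r) trail_weight (G2_tgtn x) t.
Proof.
rewrite big_distrr big_seq [RHS]big_seq; apply: eq_bigr => t.
rewrite mem_permutations => /seq.permP count_t.
by rewrite /trail_weight /= count_t exprD; case: (G2_srcn x == v); rewrite /= ?mul1r ?mul0r // mulrCA.
Qed.

Definition signed_trails_of v r :=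
  signed_trails v (count is_up r) (count is_down r) (m \in r) (m.+1 \in r) (m.+2 \in r).

Definition first_edge_term v r x :=
  (G2_srcn x == v)%:R * (-1) ^+ (if (m <= x)%N then count (ltn^~ x) (rem x r) else 0%N) *
  signed_trails_of (G2_tgtn x) (rem x r).

Section FirstEdge.
Variables (v : nat) (r : seq nat).
Hypotheses (r_uniq : uniq r) (r_small : all (ltn^~ m.+3) r).
Local Notation a := (count is_up r).
Local Notation b := (count is_down r).
Local Notation l1 := (m \in r).
Local Notation e := (m.+1 \in r).
Local Notation l2 := (m.+2 \in r).

Lemma signed_trails_of_rem v' x : x \in r ->
  signed_trails_of v' (rem x r) =
  signed_trails v' (a - is_up x) (b - is_down x) ((m != x) && l1) ((m.+1 != x) && e)
    ((m.+2 != x) && l2).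
Proof. by move=> x_r; rewrite /signed_trails_of !count_rem x_r !(mem_rem_uniq x r_uniq) !inE. Qed.

Lemma first_edge_up x : x \in r -> is_up x ->
  first_edge_term v r x = (v == 1%N)%:R * signed_trails 2 a.-1 b l1 e l2.
Proof.
move=> x_r; rewrite /is_up => /andP[x_lt_m even_x].
have [mx m1x m2x] : [/\ m != x, m.+1 != x & m.+2 != x] by split; lia.
rewrite /first_edge_term signed_trails_of_rem // /is_up /is_down /G2_srcn /G2_tgtn.
by rewrite (leqNgt m x) x_lt_m (negbTE even_x) mx m1x m2x /= expr0 mulr1 subn1 subn0 eq_sym.
Qed.

Lemma first_edge_down x : x \in r -> is_down x ->
  first_edge_term v r x = (v == 2%N)%:R * signed_trails 1 a b.-1 l1 e l2.
Proof.
move=> x_r; rewrite /is_down => /andP[x_lt_m odd_x].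
have [mx m1x m2x] : [/\ m != x, m.+1 != x & m.+2 != x] by split; lia.
rewrite /first_edge_term signed_trails_of_rem // /is_up /is_down /G2_srcn /G2_tgtn.
by rewrite (leqNgt m x) x_lt_m odd_x mx m1x m2x /= expr0 mulr1 subn1 subn0 eq_sym.
Qed.

Lemma first_edge_loop1 : m \in r ->
  first_edge_term v r m = (v == 1%N)%:R * (-1) ^+ (a + b) * signed_trails 1 a b false e l2.
Proof.
move=> m_r; have [m1m m2m] : m.+1 != m /\ m.+2 != m by split; lia.
rewrite /first_edge_term signed_trails_of_rem // count_ltn_rem count_ltn_up_down.
by rewrite /is_up /is_down /G2_srcn /G2_tgtn ltnn leqnn eqxx m1m m2m /= !subn0 eq_sym.
Qed.

Lemma first_edge_extra : m.+1 \in r ->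
  first_edge_term v r m.+1 =
  (v == 1%N)%:R * (-1) ^+ (a + b + l1) * signed_trails 2 a b l1 false l2.
Proof.
move=> m1_r; have [m1_lt_m m1m mm1 m2m1] : [/\ (m.+1 < m)%N = false, (m.+1 == m) = false,
  m != m.+1 & m.+2 != m.+1] by split; lia.
rewrite /first_edge_term signed_trails_of_rem // count_ltn_rem count_ltnS count_ltn_up_down.
rewrite /is_up /is_down /G2_srcn /G2_tgtn m1_lt_m leqnSn m1m eqxx mm1 m2m1 /=.
by rewrite count_uniq_mem // !subn0 eq_sym.
Qed.

Lemma first_edge_loop2 : m.+2 \in r ->
  first_edge_term v r m.+2 =
  (v == 2%N)%:R * (-1) ^+ (a + b + l1 + e) * signed_trails 2 a b l1 e false.
Proof.
move=> m2_r; have [m2_lt_m m_le_m2 m2m m2m1] : [/\ (m.+2 < m)%N = false, (m <= m.+2)%N,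
  (m.+2 == m) = false & (m.+2 == m.+1) = false] by split; lia.
have [mm2 m1m2] : m != m.+2 /\ m.+1 != m.+2 by split; lia.
rewrite /first_edge_term signed_trails_of_rem // count_ltn_rem !count_ltnS count_ltn_up_down.
rewrite /is_up /is_down /G2_srcn /G2_tgtn m2_lt_m m_le_m2 m2m m2m1 mm2 m1m2 eqxx /=.
by rewrite !count_uniq_mem // !subn0 eq_sym.
Qed.

Lemma sum_G2_edges (R : nmodType) (F : nat -> R) : \sum_(x <- r) F x =
  \sum_(x <- r | is_up x) F x + \sum_(x <- r | is_down x) F x
  + F m *+ l1 + F m.+1 *+ e + F m.+2 *+ l2.
Proof.
have kind_x : {in r, forall x,
    (is_up x + is_down x + (x == m) + (x == m.+1) + (x == m.+2))%N = 1%N}.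
  by move=> x /(allP r_small) /=; rewrite /is_up /is_down; case: (odd x) => /=; lia.
rewrite (eq_big_seq (fun x => F x *+ (is_up x + is_down x + (x == m) + (x == m.+1)
  + (x == m.+2))%N)) => [|x /kind_x->] //.
under eq_bigr => x _ do rewrite !mulrnDr.
rewrite !big_split /= -!sum_pred1_uniq //.
by congr (_ + _ + _ + _ + _); rewrite [RHS]big_mkcond; apply: eq_bigr => x _; rewrite mulrb.
Qed.

Lemma size_G2_edges : size r = (a + b + l1 + e + l2)%N.
Proof.
rewrite -sum1_size (sum_G2_edges (fun=> 1%N)) !(sum_const_in (c := 1%N)) //.
by rewrite !natn.
Qed.

Lemma sum_first_edge_terms : r != [::] ->
  \sum_(x <- r) first_edge_term v r x = signed_trails_of v r.
Proof.
move=> r_ne; rewrite sum_G2_edges.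
rewrite (sum_const_in (c := (v == 1%N)%:R * signed_trails 2 a.-1 b l1 e l2));
  last by move=> x x_r; apply: first_edge_up.
rewrite (sum_const_in (c := (v == 2%N)%:R * signed_trails 1 a b.-1 l1 e l2));
  last by move=> x x_r; apply: first_edge_down.
have size_gt0 : (0 < a + b + l1 + e + l2)%N by rewrite -size_G2_edges lt0n size_eq0.
rewrite /signed_trails_of (signed_trails_rec v size_gt0).
have mulrn_bool (c : bool) (x y : int) : (c -> x = y) -> x *+ c = y *+ c by case: c => // ->.
rewrite (mulrn_bool _ _ _ first_edge_loop1) (mulrn_bool _ _ _ first_edge_extra).
rewrite (mulrn_bool _ _ _ first_edge_loop2).
ring.
Qed.
End FirstEdge.

Lemma sum_trail_weight_permutations r v : uniq r -> all (ltn^~ m.+3) r ->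
  \sum_(s <- permutations r) trail_weight v s = signed_trails_of v r.
Proof.
have [n] := ubnP (size r); elim: n r v => // n IH r v size_r r_uniq r_small.
have [->|r_ne] := eqVneq r [::].
  by rewrite big_seq1 /trail_weight /signed_trails_of /=; case: v => [|[|[|v]]].
rewrite big_permutations_rem // -sum_first_edge_terms //; apply: eq_big_seq => x x_r.
rewrite sum_trail_weight_cons IH ?rem_uniq //.
  by rewrite size_rem // -ltnS prednK // lt0n size_eq0.
by apply/allP => y /mem_rem; apply: (allP r_small).
Qed.

End G2.

Lemma in_P_G2 mb (sigma : 'S_(2 * mb + 3)) :
  in_P (G2_src mb) (G2_tgt mb) 1%N 2%N sigma =
  trail (G2_srcn (2 * mb)) (G2_tgtn (2 * mb)) 1%N 2%N (edge_seq sigma).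
Proof. by apply: in_P_trail; rewrite addn3. Qed.

Theorem lemma3p5 (mb : nat) : (1 <= mb)%N ->
  S_GB (G2_src mb) (G2_tgt mb) 1%N 2%N (G2_M mb) = Posz ((mb.+1)`! ^ 2)%N.
Proof.
(* The identity also holds for mb = 0. *)
move=> _; rewrite /S_GB big_mkcond.
rewrite (eq_bigr (fun sigma => trail_weight (2 * mb) 1 (edge_seq sigma))) => [|sigma _]; last first.
  by rewrite /trail_weight in_P_G2 -sgn_mul_restr_perm_prefix; case: trail; rewrite ?mul1r ?mul0r.
rewrite sum_edge_seq sum_trail_weight_permutations ?iota_uniq //; last first.
  by apply/allP => x; rewrite mem_iota addn3.
rewrite /signed_trails_of /is_up /is_down !count_iota_ltn ?leq_addr //.
rewrite count_even_iota count_odd_iota !mem_iota add0n.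
have [-> -> ->] : [/\ 2 * mb < 2 * mb + 3, (2 * mb).+1 < 2 * mb + 3
                   & (2 * mb).+2 < 2 * mb + 3]%N by split; lia.
by rewrite signed_trails_full natz.
Qed.
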